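(* For any two infinite cardinals $p\ge q$, the generalized Baer--Levi semigroup $B(p,q)$ is not DSC.
   Context: Let $X$ be a set of cardinality $p$. $B(p,q)=\{f\colon X\to X \mid f\text{ injective and } |X\setminus Xf|=q\}$ (where $Xf$ is the image of $f$), a semigroup under composition of functions. For a semigroup $T$, a diagonal subsemigroup of $T\times T$ is a subsemigroup containing $\{(t,t)\colon t\in T\}$; a congruence is a symmetric and transitive diagonal subsemigroup; $T$ is DSC if every diagonal subsemigroup of $T\times T$ is a congruence on $T$. *)

(* Cardinals are represented by types: |X| = p, |Q| = q. *)
From Stdlib Require Import List.

Definition infinite_type (T : Type) : Prop :=
  forall l : list T, exists x : T, ~ In x l.

Definition equipotent (A B : Type) : Prop :=
  exists (g : A -> B) (h : B -> A),
    (forall a, h (g a) = a) /\ (forall b, g (h b) = b).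

Definition injective_fun {A B : Type} (f : A -> B) : Prop :=
  forall x y, f x = f y -> x = y.

Definition coimage {X : Type} (f : X -> X) : Type :=
  { x : X | ~ exists y, f y = x }.

Definition inBL (X Q : Type) (f : X -> X) : Prop :=
  injective_fun f /\ equipotent (coimage f) Q.

(* Product in the semigroup: functions act on the right, so
   x (f g) = (x f) g, i.e. f g = g o f. *)
Definition bl_mul {X : Type} (f g : X -> X) : X -> X := fun x => g (f x).

Definition diagonal_subsemigroup {X : Type} (inB : (X -> X) -> Prop)
  (rho : (X -> X) -> (X -> X) -> Prop) : Prop :=
  (forall a b, rho a b -> inB a /\ inB b) /\
  (forall a, inB a -> rho a a) /\
  (forall a b c d, rho a b -> rho c d -> rho (bl_mul a c) (bl_mul b d)).

Definition is_congruence {X : Type} (inB : (X -> X) -> Prop)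
  (rho : (X -> X) -> (X -> X) -> Prop) : Prop :=
  diagonal_subsemigroup inB rho /\
  (forall a b, rho a b -> rho b a) /\
  (forall a b c, rho a b -> rho b c -> rho a c).

Definition DSC {X : Type} (inB : (X -> X) -> Prop) : Prop :=
  forall rho, diagonal_subsemigroup inB rho -> is_congruence inB rho.

From Stdlib Require Import List Arith Lia Classical ClassicalEpsilon ProofIrrelevance.
From mathcomp Require classical_sets.

(* Since q is infinite, q + q = q: by Zorn's lemma there is a maximal set of
   "nodes" carrying a bijection nodes x 2 -> nodes, maximality leaves only
   finitely many non-nodes, and these are absorbed, giving an injection and
   then (Schroeder-Bernstein) a bijection Q + Q -> Q.  Consequently B(p,q) is
   closed under composition, since the complement of the image of a product
   is the disjoint union of two sets of size q.
   Let a rho b mean that at every point a either agrees with b or takes a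
   value outside the image of b; this is a diagonal subsemigroup.  Split a
   copy of Q inside X into halves L and R of size q, and let a, b, c act on
   that copy as the embeddings onto L, onto R, and onto L after swapping the
   halves, fixing the rest of X.  Then a rho b and b rho c, but a and c
   differ at a point where a takes a value in the image of c. *)

Section SumAbsorption.
Variable Q : Type.

(* [A (x, (y, b))] reads "x is the b-child of y": on the set of nodes, the
   child map is a bijection from nodes x bool onto nodes. *)
Definition node (A : Q * (Q * bool) -> Prop) (x : Q) : Prop := exists p, A (x, p).

Record splitting (A : Q * (Q * bool) -> Prop) : Prop := {
  parent_unique : forall x p p', A (x, p) -> A (x, p') -> p = p';
  child_unique : forall x x' p, A (x, p) -> A (x', p) -> x = x';
  parent_is_node : forall x y b, A (x, (y, b)) -> node A y;
  child_exists : forall y b, node A y -> exists x, A (x, (y, b)) }.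

Lemma exists_maximal_splitting : exists A, splitting A /\
  forall B, (forall t, A t -> B t) -> ~ (forall t, B t -> A t) -> ~ splitting B.
Proof.
destruct (@classical_sets.Zorn_bigcup _ splitting) as [A [SA maxA]].
- intros F FS tot.
  assert (both : forall X Y t t', F X -> F Y -> X t -> Y t' ->
            exists2 Z, F Z & Z t /\ Z t').
  { intros X Y t t' FX FY Xt Yt'.
    destruct (tot X Y FX FY) as [XY|YX]; [exists Y|exists X]; auto. }
  constructor.
  + intros x p p' [X FX Xp] [Y FY Yp].
    destruct (both _ _ _ _ FX FY Xp Yp) as [Z FZ [Zp Zp']].
    exact (parent_unique _ (FS Z FZ) _ _ _ Zp Zp').
  + intros x x' p [X FX Xp] [Y FY Yp].
    destruct (both _ _ _ _ FX FY Xp Yp) as [Z FZ [Zp Zp']].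
    exact (child_unique _ (FS Z FZ) _ _ _ Zp Zp').
  + intros x y b [X FX Xp].
    destruct (parent_is_node _ (FS X FX) _ _ _ Xp) as [p Yp].
    exists p, X; assumption.
  + intros y b [p [X FX Xp]].
    destruct (child_exists _ (FS X FX) y b) as [x Xx]; [exists p; exact Xp|].
    exists x, X; assumption.
- exists A; split; [exact SA|].
  intros B AB BA SB. exact (maxA B (conj AB BA) SB).
Qed.

Section FreshTree.
Variable A : Q * (Q * bool) -> Prop.
Hypothesis SA : splitting A.
Variable pick : list Q -> Q.
Hypothesis pick_fresh : forall l, ~ node A (pick l) /\ ~ In (pick l) l.

Fixpoint fresh_prefix (n : nat) : list Q :=
  match n with 0 => nil | S n => pick (fresh_prefix n) :: fresh_prefix n end.

Definition fresh (n : nat) : Q := pick (fresh_prefix n).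

Lemma fresh_in_prefix n m : m < n -> In (fresh m) (fresh_prefix n).
Proof.
induction n as [|n IH]; intros Hm; [inversion Hm|]. simpl.
destruct (Nat.eq_dec m n) as [->|ne]; [left; reflexivity|right; apply IH; lia].
Qed.

Lemma fresh_injective m n : fresh m = fresh n -> m = n.
Proof.
intros E. destruct (lt_eq_lt_dec m n) as [[lt|eq]|gt]; [exfalso| exact eq| exfalso].
- apply (proj2 (pick_fresh (fresh_prefix n))). fold (fresh n).
  rewrite <- E. apply fresh_in_prefix, lt.
- apply (proj2 (pick_fresh (fresh_prefix m))). fold (fresh m).
  rewrite E. apply fresh_in_prefix, gt.
Qed.

Lemma div2_odd_double_add (n : nat) (b : bool) :
  Nat.div2 (2 * n + Nat.b2n b) = n /\ Nat.odd (2 * n + Nat.b2n b) = b.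
Proof.
destruct b; simpl Nat.b2n.
- split; [apply Nat.div2_odd'|apply Nat.odd_odd].
- rewrite Nat.add_0_r. split; [apply Nat.div2_double|apply Nat.odd_even].
Qed.

(* The fresh elements, indexed as a heap ([2n] and [2n+1] are the children
   of [n], and [fresh 0] is its own 0-child), form a new component. *)
Definition add_fresh_tree (t : Q * (Q * bool)) : Prop :=
  A t \/ exists n, t = (fresh n, (fresh (Nat.div2 n), Nat.odd n)).

Lemma splitting_add_fresh_tree : splitting add_fresh_tree.
Proof.
assert (fresh_not_node : forall n p, ~ A (fresh n, p)).
{ intros n p Ap. apply (proj1 (pick_fresh (fresh_prefix n))). exists p; exact Ap. }
constructor.
- intros x p p' [Ap|[n Ep]] [Ap'|[n' Ep']].
  + exact (parent_unique _ SA _ _ _ Ap Ap').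
  + injection Ep' as -> ->. destruct (fresh_not_node _ _ Ap).
  + injection Ep as -> ->. destruct (fresh_not_node _ _ Ap').
  + injection Ep as Ex ->. injection Ep' as Ex' ->.
    rewrite Ex in Ex'. apply fresh_injective in Ex' as ->. reflexivity.
- intros x x' [y b] [Ap|[n Ep]] [Ap'|[n' Ep']].
  + exact (child_unique _ SA _ _ _ Ap Ap').
  + injection Ep' as -> -> ->. destruct (parent_is_node _ SA _ _ _ Ap) as [q Aq].
    destruct (fresh_not_node _ _ Aq).
  + injection Ep as -> -> ->. destruct (parent_is_node _ SA _ _ _ Ap') as [q Aq].
    destruct (fresh_not_node _ _ Aq).
  + injection Ep as -> Ey Eb. injection Ep' as -> Ey' Eb'.
    rewrite Ey in Ey'. apply fresh_injective in Ey'. f_equal.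
    rewrite (Nat.div2_odd n), (Nat.div2_odd n'). congruence.
- intros x y b [Ap|[n Ep]].
  + destruct (parent_is_node _ SA _ _ _ Ap) as [p Ayp]. exists p; left; exact Ayp.
  + injection Ep as -> -> ->. eexists. right. exists (Nat.div2 n). reflexivity.
- intros y b [p [Ap|[n Ep]]].
  + destruct (child_exists _ SA y b) as [x Ax]; [exists p; exact Ap|].
    exists x; left; exact Ax.
  + injection Ep as -> _. exists (fresh (2 * n + Nat.b2n b)). right.
    exists (2 * n + Nat.b2n b). destruct (div2_odd_double_add n b) as [-> ->].
    reflexivity.
Qed.

End FreshTree.

Lemma maximal_splitting_cofinite (A : Q * (Q * bool) -> Prop) : splitting A ->
  (forall B, (forall t, A t -> B t) -> ~ (forall t, B t -> A t) -> ~ splitting B) ->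
  exists l, forall x, ~ node A x -> In x l.
Proof.
intros SA maxA. apply NNPP. intros no_list.
assert (has_fresh : forall l, exists x, ~ node A x /\ ~ In x l).
{ intros l. apply NNPP. intros no_fresh. apply no_list. exists l.
  intros x nx. apply NNPP. intros nl. apply no_fresh. exists x; auto. }
destruct (choice _ has_fresh) as [pick pick_fresh].
apply (maxA (add_fresh_tree A pick)).
- intros t At. left; exact At.
- intros sub. apply (proj1 (pick_fresh nil)).
  exists (fresh pick 0, false). apply sub. right. exists 0. reflexivity.
- exact (splitting_add_fresh_tree A SA pick pick_fresh).
Qed.

Section SumIntoNodes.
Variable A : Q * (Q * bool) -> Prop.
Hypothesis SA : splitting A.
Variable d0 : Q.
Hypothesis d0_node : node A d0.
Variable l : list Q.
Hypothesis l_covers : forall x, ~ node A x -> In x l.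

Definition child (b : bool) (y : Q) : Q := epsilon (inhabits d0) (fun x => A (x, (y, b))).

Lemma child_spec b y : node A y -> A (child b y, (y, b)).
Proof. intros Ny. unfold child. apply epsilon_spec, (child_exists _ SA _ _ Ny). Qed.

Lemma child_node b y : node A y -> node A (child b y).
Proof. intros Ny. exists (y, b). apply child_spec, Ny. Qed.

Lemma child_injective b b' y y' : node A y -> node A y' ->
  child b y = child b' y' -> y = y' /\ b = b'.
Proof.
intros Ny Ny' E. pose proof (child_spec b y Ny) as C. rewrite E in C.
pose proof (parent_unique _ SA _ _ _ C (child_spec b' y' Ny')) as P.
injection P; auto.
Qed.

(* Starting with a 1-child makes the spine injective even if [d0] is its
   own 0-child. *)
Definition spine (n : nat) : Q := Nat.iter n (child false) (child true d0).

Lemma spine_node n : node A (spine n).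
Proof. induction n; simpl; apply child_node; assumption. Qed.

Lemma spine_injective : forall m n, spine m = spine n -> m = n.
Proof.
induction m as [|m IH]; intros [|n] E; simpl in E; [reflexivity| | |].
- apply child_injective in E as [_ F]; [discriminate| exact d0_node| apply spine_node].
- apply child_injective in E as [_ F]; [discriminate| apply spine_node| exact d0_node].
- apply child_injective in E as [E _]; [f_equal; apply IH, E| apply spine_node..].
Qed.

Fixpoint position (x : Q) (s : list Q) : nat :=
  match s with
  | nil => 0
  | y :: s => if excluded_middle_informative (y = x) then 0 else S (position x s)
  end.

Lemma position_injective s x y : In x s -> In y s -> position x s = position y s -> x = y.
Proof.
induction s as [|a s IH]; intros Hx Hy E; [destruct Hx|]. simpl in E.
destruct (excluded_middle_informative (a = x)) as [ax|ax];
  destruct (excluded_middle_informative (a = y)) as [ay|ay]; try discriminate.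
- congruence.
- destruct Hx as [|Hx]; [contradiction|]. destruct Hy as [|Hy]; [contradiction|].
  injection E. apply IH; assumption.
Qed.

Definition into_nodes (x : Q) : Q :=
  if excluded_middle_informative (node A x) then child false x
  else child true (spine (position x l)).

Lemma into_nodes_node x : node A (into_nodes x).
Proof.
unfold into_nodes. destruct (excluded_middle_informative (node A x));
  apply child_node; [assumption|apply spine_node].
Qed.

Lemma into_nodes_injective x y : into_nodes x = into_nodes y -> x = y.
Proof.
unfold into_nodes.
destruct (excluded_middle_informative (node A x)) as [Nx|Nx];
  destruct (excluded_middle_informative (node A y)) as [Ny|Ny]; intros E.
- apply child_injective in E; tauto.
- apply child_injective in E as [_ F]; [discriminate|assumption|apply spine_node].
- apply child_injective in E as [_ F]; [discriminate|apply spine_node|assumption].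
- apply child_injective in E as [E _]; [|apply spine_node..].
  apply spine_injective in E. apply (position_injective l); auto.
Qed.

Definition sum_into_nodes (z : Q + Q) : Q :=
  match z with
  | inl x => child false (into_nodes x)
  | inr x => child true (into_nodes x)
  end.

Lemma sum_into_nodes_injective : injective_fun sum_into_nodes.
Proof.
intros [x|x] [y|y] E; simpl in E;
  apply child_injective in E as [E F]; try apply into_nodes_node;
  try discriminate; f_equal; apply into_nodes_injective, E.
Qed.

End SumIntoNodes.

Section SchroederBernstein.
Variable e : Q + Q -> Q.
Hypothesis e_injective : injective_fun e.

(* The Schroeder-Bernstein bijection for [e] and [inl : Q -> Q + Q]: apply
   [e] on the orbits [inr q, inl (e (inr q)), ...] and untag elsewhere. *)
Inductive right_orbit : Q + Q -> Prop :=
  | right_orbit_start q : right_orbit (inr q)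
  | right_orbit_step z : right_orbit z -> right_orbit (inl (e z)).

Definition absorb (z : Q + Q) : Q :=
  if excluded_middle_informative (right_orbit z) then e z
  else match z with inl q | inr q => q end.

Lemma absorb_injective : injective_fun absorb.
Proof.
intros z z'. unfold absorb.
destruct (excluded_middle_informative (right_orbit z)) as [Oz|Oz];
  destruct (excluded_middle_informative (right_orbit z')) as [Oz'|Oz']; intros E.
- apply e_injective, E.
- destruct z' as [q|q]; [|destruct Oz'; constructor].
  destruct Oz'. subst q. constructor. exact Oz.
- destruct z as [q|q]; [|destruct Oz; constructor].
  destruct Oz. rewrite E. constructor. exact Oz'.
- destruct z as [q|q]; [|destruct Oz; constructor].
  destruct z' as [q'|q']; [|destruct Oz'; constructor]. congruence.
Qed.

Lemma absorb_surjective q : exists z, absorb z = q.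
Proof.
unfold absorb. destruct (excluded_middle_informative (right_orbit (inl q))) as [O|O].
- inversion O as [|z Oz E]. exists z.
  destruct (excluded_middle_informative (right_orbit z)); [reflexivity|contradiction].
- exists (inl q).
  destruct (excluded_middle_informative (right_orbit (inl q))); [contradiction|reflexivity].
Qed.

Lemma injection_sum_equipotent : equipotent (Q + Q) Q.
Proof.
destruct (choice _ absorb_surjective) as [inv invK].
exists absorb, inv. split; [|exact invK].
intros z. apply absorb_injective. rewrite invK. reflexivity.
Qed.

End SchroederBernstein.

Lemma equipotent_sum_self : infinite_type Q -> equipotent (Q + Q) Q.
Proof.
intros Qinf.
destruct exists_maximal_splitting as [A [SA maxA]].
destruct (maximal_splitting_cofinite A SA maxA) as [l l_covers].
destruct (Qinf l) as [d0 d0_out].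
assert (d0_node : node A d0) by (apply NNPP; intros N; apply d0_out, l_covers, N).
exact (injection_sum_equipotent _ (sum_into_nodes_injective A SA d0 d0_node l l_covers)).
Qed.

End SumAbsorption.

Section Coimage.
Context {X Q : Type}.

Definition enumerates_coimage (f : X -> X) (k : Q -> X) : Prop :=
  injective_fun k /\ (forall q y, f y <> k q) /\
  (forall x, (forall y, f y <> x) -> exists q, k q = x).

Lemma coimage_eq (f : X -> X) (s t : coimage f) : proj1_sig s = proj1_sig t -> s = t.
Proof. apply eq_sig_hprop. intros x p p'. apply proof_irrelevance. Qed.

Lemma equipotent_of_enumerates (f : X -> X) (k : Q -> X) :
  enumerates_coimage f k -> equipotent (coimage f) Q.
Proof.
intros [k_inj [k_out k_cover]].
assert (cover : forall s : coimage f, exists q, k q = proj1_sig s).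
{ intros [x Nx]. apply k_cover. intros y E. apply Nx. exists y; exact E. }
destruct (choice _ cover) as [index indexK].
assert (k_coimage : forall q, ~ exists y, f y = k q) by (intros q [y E]; exact (k_out q y E)).
exists index, (fun q => exist _ (k q) (k_coimage q)). split.
- intros s. apply coimage_eq, indexK.
- intros q. apply k_inj. exact (indexK (exist _ (k q) (k_coimage q))).
Qed.

Lemma enumerates_of_equipotent (f : X -> X) :
  equipotent (coimage f) Q -> exists k : Q -> X, enumerates_coimage f k.
Proof.
intros [g [k [gK kK]]].
exists (fun q => proj1_sig (k q)). split; [|split].
- intros q q' E. apply coimage_eq in E. rewrite <- (kK q), <- (kK q'), E. reflexivity.
- intros q y E. apply (proj2_sig (k q)). exists y; exact E.
- intros x Nx. assert (Cx : ~ exists y, f y = x) by (intros [y E]; exact (Nx y E)).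
  exists (g (exist _ x Cx)). rewrite gK. reflexivity.
Qed.

End Coimage.

Section BaerLevi.
Variables X Q : Type.
Variable h : Q + Q -> Q.
Variable h' : Q -> Q + Q.
Hypothesis hK : forall z, h' (h z) = z.
Hypothesis h'K : forall q, h (h' q) = q.

Lemma h_injective : injective_fun h.
Proof. intros z z' E. rewrite <- (hK z), <- (hK z'), E. reflexivity. Qed.

(* X \ X(ac) is the disjoint union of X \ Xc and (X \ Xa)c. *)
Lemma inBL_mul a c : inBL X Q a -> inBL X Q c -> inBL X Q (bl_mul a c).
Proof.
intros [a_inj a_coim] [c_inj c_coim].
apply enumerates_of_equipotent in a_coim as [ka [ka_inj [ka_out ka_cover]]].
apply enumerates_of_equipotent in c_coim as [kc [kc_inj [kc_out kc_cover]]].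
unfold bl_mul. split; [intros x y E; apply a_inj, c_inj, E|].
apply (equipotent_of_enumerates _
  (fun q => match h' q with inl u => kc u | inr u => c (ka u) end)).
split; [|split].
- intros q q' E. rewrite <- (h'K q), <- (h'K q'). f_equal.
  destruct (h' q) as [u|u], (h' q') as [u'|u'].
  + f_equal. apply kc_inj, E.
  + destruct (kc_out u _ (eq_sym E)).
  + destruct (kc_out u' _ E).
  + f_equal. apply ka_inj, c_inj, E.
- intros q y. destruct (h' q) as [u|u]; [apply kc_out|].
  intros E. apply c_inj in E. exact (ka_out u y E).
- intros x Nx. destruct (classic (exists y, c y = x)) as [[y <-]|Cx].
  + assert (Ny : forall w, a w <> y) by (intros w E; apply (Nx w); congruence).
    destruct (ka_cover y Ny) as [u <-]. exists (h (inr u)). rewrite hK. reflexivity.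
  + assert (Nc : forall y, c y <> x) by (intros y E; apply Cx; exists y; exact E).
    destruct (kc_cover x Nc) as [u <-]. exists (h (inl u)). rewrite hK. reflexivity.
Qed.

Definition agrees_or_escapes (a b : X -> X) : Prop :=
  inBL X Q a /\ inBL X Q b /\ forall x, a x = b x \/ ~ exists y, b y = a x.

Lemma agrees_or_escapes_diagonal : diagonal_subsemigroup (inBL X Q) agrees_or_escapes.
Proof.
split; [|split].
- intros a b [Ba [Bb _]]. split; assumption.
- intros a Ba. split; [|split]; [assumption..|]. intros x; left; reflexivity.
- intros a b c d [Ba [Bb rab]] [Bc [Bd rcd]].
  split; [apply inBL_mul; assumption|split; [apply inBL_mul; assumption|]].
  destruct Bd as [d_inj _]. unfold bl_mul. intros x.
  destruct (rab x) as [E|Nab]; [rewrite E; destruct (rcd (b x)) as [E'|Ncd]|].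
  + left; exact E'.
  + right. intros [y Ey]. apply Ncd. exists (b y). exact Ey.
  + right. intros [y Ey]. destruct (rcd (a x)) as [E'|Ncd].
    * rewrite E' in Ey. apply d_inj in Ey. apply Nab. exists y; exact Ey.
    * apply Ncd. exists (b y). exact Ey.
Qed.

Variable i : Q -> X.
Hypothesis i_inj : injective_fun i.

Definition extend (g : Q -> Q) (x : X) : X :=
  match excluded_middle_informative (exists q, i q = x) with
  | left H => i (g (proj1_sig (constructive_indefinite_description _ H)))
  | right _ => x
  end.

Lemma extend_i g q : extend g (i q) = i (g q).
Proof.
unfold extend. destruct (excluded_middle_informative (exists q', i q' = i q)) as [H|H].
- destruct (constructive_indefinite_description _ H) as [q' E]. simpl.
  apply i_inj in E as ->. reflexivity.
- destruct H. exists q; reflexivity.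
Qed.

Lemma extend_out g x : (~ exists q, i q = x) -> extend g x = x.
Proof.
intros H. unfold extend.
destruct (excluded_middle_informative (exists q, i q = x)); [contradiction|reflexivity].
Qed.

Lemma extend_eq_i g x q : extend g x = i q -> exists2 q', x = i q' & g q' = q.
Proof.
destruct (classic (exists q', i q' = x)) as [[q' <-]|Nx]; intros E.
- rewrite extend_i in E. exists q'; [reflexivity|apply i_inj, E].
- rewrite extend_out in E by exact Nx. destruct Nx. exists q; symmetry; exact E.
Qed.

Lemma inBL_extend (g k : Q -> Q) : injective_fun g -> enumerates_coimage g k -> inBL X Q (extend g).
Proof.
intros g_inj [k_inj [k_out k_cover]]. split.
- intros x y E. destruct (classic (exists q, i q = x)) as [[q <-]|Nx].
  + rewrite extend_i in E. symmetry in E.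
    apply extend_eq_i in E as [q' -> E]. rewrite (g_inj _ _ E). reflexivity.
  + rewrite (extend_out _ _ Nx) in E.
    destruct (classic (exists q, i q = y)) as [[q <-]|Ny].
    * destruct Nx. exists (g q). rewrite E, extend_i. reflexivity.
    * rewrite (extend_out _ _ Ny) in E. exact E.
- apply (equipotent_of_enumerates _ (fun q => i (k q))). split; [|split].
  + intros q q' E. apply k_inj, i_inj, E.
  + intros q y E. apply extend_eq_i in E as [q' _ E]. exact (k_out q q' E).
  + intros x Nx. destruct (classic (exists q, i q = x)) as [[q <-]|Cx].
    * destruct (k_cover q) as [q' <-]; [|exists q'; reflexivity].
      intros y E. apply (Nx (i y)). rewrite extend_i, E. reflexivity.
    * destruct (Nx x). apply extend_out, Cx.
Qed.

Lemma agrees_or_escapes_extend g g' : inBL X Q (extend g) -> inBL X Q (extend g') ->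
  (forall q q', g q <> g' q') -> agrees_or_escapes (extend g) (extend g').
Proof.
intros Bg Bg' disjoint. split; [|split]; [assumption..|]. intros x.
destruct (classic (exists q, i q = x)) as [[q <-]|Nx].
- right. intros [y E]. rewrite extend_i in E.
  apply extend_eq_i in E as [q' _ E]. exact (disjoint q q' (eq_sym E)).
- left. rewrite !extend_out by exact Nx. reflexivity.
Qed.

Definition left_half (u : Q) : Q := h (inl u).
Definition right_half (u : Q) : Q := h (inr u).

Lemma halves_disjoint u v : left_half u <> right_half v.
Proof. intros E. apply h_injective in E. discriminate. Qed.

Lemma left_half_injective : injective_fun left_half.
Proof. intros u v E. apply h_injective in E. congruence. Qed.

Lemma right_half_injective : injective_fun right_half.
Proof. intros u v E. apply h_injective in E. congruence. Qed.

Lemma enumerates_coimage_left (s : Q -> Q) : (forall u, exists q, s q = u) ->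
  enumerates_coimage (fun q => left_half (s q)) right_half.
Proof.
intros s_surj. split; [exact right_half_injective|split].
- intros q y. apply halves_disjoint.
- intros x Nx. rewrite <- (h'K x) in *. destruct (h' x) as [u|u].
  + destruct (s_surj u) as [q <-]. destruct (Nx q). reflexivity.
  + exists u; reflexivity.
Qed.

Lemma enumerates_coimage_right : enumerates_coimage right_half left_half.
Proof.
split; [exact left_half_injective|split].
- intros q y E. exact (halves_disjoint q y (eq_sym E)).
- intros x Nx. rewrite <- (h'K x) in *. destruct (h' x) as [u|u].
  + exists u; reflexivity.
  + destruct (Nx u). reflexivity.
Qed.

Definition swap_halves (q : Q) : Q :=
  match h' q with inl u => right_half u | inr u => left_half u end.

Lemma swap_halvesK q : swap_halves (swap_halves q) = q.
Proof.
rewrite <- (h'K q) at 2. unfold swap_halves.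
destruct (h' q) as [u|u]; unfold left_half, right_half; rewrite hK; reflexivity.
Qed.

Lemma swap_halves_neq q : swap_halves q <> q.
Proof.
rewrite <- (h'K q) at 2. unfold swap_halves.
destruct (h' q) as [u|u]; intros E; apply h_injective in E; discriminate.
Qed.

Lemma agrees_or_escapes_not_transitive (q0 : Q) :
  ~ forall a b c, agrees_or_escapes a b -> agrees_or_escapes b c -> agrees_or_escapes a c.
Proof.
set (c := fun q => left_half (swap_halves q)).
assert (c_inj : injective_fun c).
{ intros u v E. rewrite <- (swap_halvesK u), <- (swap_halvesK v).
  f_equal. apply left_half_injective, E. }
assert (swap_surj : forall u, exists q, swap_halves q = u).
{ intros u. exists (swap_halves u). apply swap_halvesK. }
assert (Ba : inBL X Q (extend left_half)).
{ apply (inBL_extend _ _ left_half_injective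
    (enumerates_coimage_left id (fun u => ex_intro _ u eq_refl))). }
assert (Bb : inBL X Q (extend right_half))
  by exact (inBL_extend _ _ right_half_injective enumerates_coimage_right).
assert (Bc : inBL X Q (extend c))
  by exact (inBL_extend _ _ c_inj (enumerates_coimage_left _ swap_surj)).
intros trans.
destruct (trans (extend left_half) (extend right_half) (extend c)) as [_ [_ rac]].
- apply agrees_or_escapes_extend; [assumption..|]. apply halves_disjoint.
- apply agrees_or_escapes_extend; [assumption..|].
  intros u v E. exact (halves_disjoint _ _ (eq_sym E)).
- destruct (rac (i q0)) as [E|N]; rewrite !extend_i in *.
  + apply i_inj, left_half_injective in E. exact (swap_halves_neq q0 (eq_sym E)).
  + apply N. exists (i (swap_halves q0)). rewrite extend_i. unfold c.
    rewrite swap_halvesK. reflexivity.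
Qed.

End BaerLevi.

Theorem mainTheorem12 (X Q : Type) :
  infinite_type Q ->
  (exists i : Q -> X, injective_fun i) ->
  ~ DSC (inBL X Q).
Proof.
intros Qinf [i i_inj] dsc.
destruct (equipotent_sum_self Q Qinf) as [h [h' [hK h'K]]].
destruct (Qinf nil) as [q0 _].
apply (agrees_or_escapes_not_transitive X Q h h' hK h'K i i_inj q0).
apply (dsc _ (agrees_or_escapes_diagonal X Q h h' hK h'K)).
Qed.
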